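(* Assume the predecessor sets are consecutive, i.e. $\pi_C(j)=\{j-I_j,\dots,j-1\}$ for all $j$, so that $\psi_C(j)=\{1,\dots,C\}$ for $j\le C$ and $\psi_C(j)=\{j-C+1,\dots,j\}$ for $j\ge C$. Then for every $j\in\{1,\dots,J\}$ the principal submatrices indexed by the blocks $\psi_C(j)$ coincide: $$\big(\mathbf S_C^{-1}\big)_{[\psi_C(j),\psi_C(j)]}=\big(\mathbf K_{\mathbf A\mathbf A}\big)_{[\psi_C(j),\psi_C(j)]},$$ so that the block band-diagonals $-C+1,\dots,C-1$ of $\mathbf S_C^{-1}$ and $\mathbf K_{\mathbf A\mathbf A}$ agree. In particular, for $C=J$, $\mathbf S_J^{-1}=\mathbf K_{\mathbf A\mathbf A}$.
   Context: Let $k:\mathbb R^D\times\mathbb R^D\to\mathbb R$ be a positive definite kernel. For matrices $\mathbf U\in\mathbb R^{m\times D}$, $\mathbf W\in\mathbb R^{n\times D}$ whose rows are points of $\mathbb R^D$, $\mathbf K_{\mathbf U\mathbf W}\in\mathbb R^{m\times n}$ has entries $k(U_i,W_l)$. All kernel matrices that are inverted below are assumed invertible. Inducing inputs: fix $J\ge1$, $L\ge1$, $\mathbf A_j\in\mathbb R^{L\times D}$, $\mathbf A=(\mathbf A_1;\dots;\mathbf A_J)$, $M=LJ$. For $\varphi\subseteq\{1,\dots,J\}$ listed increasingly as $\varphi^1<\varphi^2<\cdots$, $\mathbf A_\varphi$ denotes the vertical stack of the corresponding blocks; for an $M\times M$ matrix $\mathbf Z$ viewed as $J\times J$ blocks of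 size $L\times L$, $\mathbf Z_{[\varphi,\varphi]}$ is the submatrix of block rows and columns in $\varphi$. Predecessor and correlation sets: for each $C\in\{1,\dots,J\}$ and $j\in\{1,\dots,J\}$ a set $\pi_C(j)\subseteq\{1,\dots,j-1\}$ with $|\pi_C(j)|=I_j:=\min(j-1,C-1)$; the correlation set is $\psi_C(j)=\pi_C(j)\cup\{j,\dots,C\}$ if $j<C$ and $\psi_C(j)=\pi_C(j)\cup\{j\}$ if $j\ge C$. Write $\pi(j)=\pi_C(j)$ when $C$ is fixed. Matrices (for fixed $C$): $\mathbf F_j=\mathbf K_{\mathbf A_j\mathbf A_{\pi(j)}}\mathbf K_{\mathbf A_{\pi(j)}\mathbf A_{\pi(j)}}^{-1}\in\mathbb R^{L\times LI_j}$; $\mathbf Q_j=\mathbf K_{\mathbf A_j\mathbf A_j}-\mathbf K_{\mathbf A_j\mathbf A_{\pi(j)}}\mathbf K_{\mathbf A_{\pi(j)}\mathbf A_{\pi(j)}}^{-1}\mathbf K_{\mathbf A_{\pi(j)}\mathbf A_j}$; if $\pi(j)=\emptyset$ then $\mathbf F_j$ is empty and $\mathbf Q_j=\mathbf K_{\mathbf A_j\mathbf A_j}$. Partition $\mathbf F_j=[\mathbf F_j^1,\dots,\mathbf F_j^{I_j}]$ into $L\times L$ blocks, $\mathbf F_j^i$ corresponding to $\pi^i(j)$. $\mathbf Q=\mathrm{blockdiag}(\mathbf Q_1,\dots,\mathbf Q_J)$; $\mathbf F\in\mathbb R^{M\times M}$ is the $J\times J$ block matrix with $\mathbb I_L$ in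 each diagonal block, $-\mathbf F_j^i$ in block $(j,\pi^i(j))$ and zero elsewhere; $\mathbf S_C=\mathbf F^T\mathbf Q^{-1}\mathbf F$ (the precision matrix of the CPoE prior $q_C(\mathbf a)=\prod_j\mathcal N(\mathbf a_j;\mathbf F_j\mathbf a_{\pi(j)},\mathbf Q_j)$). *)

From mathcomp Require Import all_boot all_order all_algebra.
Set Implicit Arguments. Unset Strict Implicit. Unset Printing Implicit Defensive.
Import Order.TTheory GRing.Theory Num.Theory.
Local Open Scope ring_scope.

Section CPoE.
Variables (R : realFieldType) (D : nat).

Definition pd_kernel (k : 'rV[R]_D -> 'rV[R]_D -> R) : Prop :=
  (forall x y, k x y = k y x) /\
  forall (n : nat) (X : 'I_n -> 'rV[R]_D) (c : 'I_n -> R),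
    0 <= \sum_(i < n) \sum_(l < n) c i * c l * k (X i) (X l).

Variable k : 'rV[R]_D -> 'rV[R]_D -> R.

Definition Kmx m n (U : 'M[R]_(m, D)) (W : 'M[R]_(n, D)) : 'M[R]_(m, n) :=
  \matrix_(i, l) k (row i U) (row l W).

Variables (J L : nat) (A : 'I_J -> 'M[R]_(L, D)).

Definition Afull : 'M[R]_(\sum_(j < J) L, D) :=
  @mxcol R J (fun _ => L) D (fun j => A j).

Definition Astack (phi : {set 'I_J}) : 'M[R]_(\sum_(a < #|phi|) L, D) :=
  @mxcol R #|phi| (fun _ => L) D (fun a => A (enum_val a)).

Definition blocksub (Z : 'M[R]_(\sum_(j < J) L)) (phi : {set 'I_J}) :
    'M[R]_(\sum_(a < #|phi|) L) :=
  @mxblock R #|phi| #|phi| (fun _ => L) (fun _ => L)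
    (fun a b => @submxblock R J J (fun _ => L) (fun _ => L) Z
                  (enum_val a) (enum_val b)).

Variable pi : 'I_J -> {set 'I_J}.

Definition Kpi (j : 'I_J) := Kmx (Astack (pi j)) (Astack (pi j)).

Definition Fj (j : 'I_J) : 'M[R]_(L, \sum_(a < #|pi j|) L) :=
  Kmx (A j) (Astack (pi j)) *m invmx (Kpi j).

(* Q_j (when pi j is empty the correction term is a 0-dimensional product = 0) *)
Definition Qj (j : 'I_J) : 'M[R]_L :=
  Kmx (A j) (A j) - Kmx (A j) (Astack (pi j)) *m invmx (Kpi j)
                    *m Kmx (Astack (pi j)) (A j).

Definition Qbig : 'M[R]_(\sum_(j < J) L) :=
  @mxdiag R J (fun _ => L) (fun j => Qj j).

Definition Fblock (j i : 'I_J) : 'M[R]_L :=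
  if i == j then 1%:M
  else - \sum_(a < #|pi j|)
           (if enum_val a == i
            then @submxrow R #|pi j| (fun _ => L) L (Fj j) a else 0).

Definition Fbig : 'M[R]_(\sum_(j < J) L) :=
  @mxblock R J J (fun _ => L) (fun _ => L) (fun j i => Fblock j i).

Definition S_C : 'M[R]_(\sum_(j < J) L) := Fbig^T *m invmx Qbig *m Fbig.

End CPoE.

(* correlation set psi_C(j), 0-based: j (0-based) < C-1 (0-based)  <->  j+1 < C (1-based),
   {j,...,C} (1-based) = {i | j <= i < C} (0-based) *)
Definition psi (J C : nat) (pi : 'I_J -> {set 'I_J}) (j : 'I_J) : {set 'I_J} :=
  if (j.+1 < C)%N then pi j :|: [set i : 'I_J | (j <= i < C)%N]
  else pi j :|: [set j].

(* Let Sigma := S_C^-1, so that F Sigma F^T = Q.  Since F is block unit lower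
   triangular (predecessors come first) and Q is block diagonal, F Sigma is
   block upper triangular with diagonal blocks Q_j.  Reading off row j of
   F Sigma gives, for i < j, Sigma_ji = F_j Sigma_pi(j),i and
   Sigma_jj = Q_j + F_j Sigma_pi(j),j.  Whenever the blocks of Sigma on the
   right agree with those of K, these are exactly the Gaussian conditioning
   identities K_ji = F_j K_pi(j),i (for i in pi(j)) and
   K_jj = Q_j + F_j K_pi(j),j.  With consecutive predecessor sets every block
   within distance C - 1 of the diagonal is reached by an induction along the
   band, and the blocks of psi_C(j) all lie within that distance. *)

From mathcomp Require Import all_boot all_order all_algebra.
From mathcomp Require Import zify.
Import Order.TTheory GRing.Theory Num.Theory.
Local Open Scope ring_scope.
Set Implicit Arguments. Unset Strict Implicit. Unset Printing Implicit Defensive.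

Lemma invmx_mul (R : comUnitRingType) n (A B : 'M[R]_n) :
  A \in unitmx -> B \in unitmx -> invmx (A *m B) = invmx B *m invmx A.
Proof.
move=> uA uB; have uAB : A *m B \in unitmx by rewrite unitmx_mul uA uB.
have AB_inv : (A *m B) *m (invmx B *m invmx A) = 1%:M.
  by rewrite mulmxA mulmxK // mulmxV.
by rewrite -[LHS]mulmx1 -AB_inv mulKmx.
Qed.

Section UniformBlocks.
Variables (R : pzSemiRingType) (J L : nat).
Local Notation N := (\sum_(j < J) L)%N.

Definition blk (Z : 'M[R]_N) (j i : 'I_J) : 'M[R]_L :=
  @submxblock R J J (fun _ => L) (fun _ => L) Z j i.

Lemma blk_mxblock (B : 'I_J -> 'I_J -> 'M[R]_L) j i :
  blk (@mxblock R J J (fun _ => L) (fun _ => L) B) j i = B j i.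
Proof. exact: mxblockK. Qed.

Lemma mxblock_blk (Z : 'M[R]_N) :
  @mxblock R J J (fun _ => L) (fun _ => L) (blk Z) = Z.
Proof. exact: submxblockK. Qed.

Lemma eq_blk (Z Z' : 'M[R]_N) : (forall j i, blk Z j i = blk Z' j i) -> Z = Z'.
Proof. by move=> eqZ; rewrite -(mxblock_blk Z) -(mxblock_blk Z'); apply: eq_mxblock. Qed.

Lemma blk_tr (Z : 'M[R]_N) j i : blk Z^T j i = (blk Z i j)^T.
Proof. by rewrite /blk tr_submxblock. Qed.

Lemma blk_mul (X Y : 'M[R]_N) j i :
  blk (X *m Y) j i = \sum_m blk X j m *m blk Y m i.
Proof. by rewrite -{1}(mxblock_blk X) -{1}(mxblock_blk Y) mul_mxblock blk_mxblock. Qed.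

Lemma blk_mxdiag (B : 'I_J -> 'M[R]_L) j i :
  blk (@mxdiag R J (fun _ => L) B) j i = if j == i then B j else 0.
Proof.
have [<-|ne] := eqVneq j i; first exact: submxblock_diag.
by rewrite /blk mxblockK (negPf ne).
Qed.

End UniformBlocks.

Section KernelMatrices.
Variables (R : realFieldType) (D : nat) (k : 'rV[R]_D -> 'rV[R]_D -> R).

Lemma Kmx_mxcol_mxcol p q (p_ : 'I_p -> nat) (q_ : 'I_q -> nat)
    (U : forall a, 'M[R]_(p_ a, D)) (W : forall b, 'M[R]_(q_ b, D)) :
  Kmx k (mxcol U) (mxcol W) = mxblock (fun a b => Kmx k (U a) (W b)).
Proof. by apply/matrixP => i l; rewrite !mxE !row_mxcol. Qed.

Lemma Kmx_mxcol_l p m (p_ : 'I_p -> nat)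
    (U : forall a, 'M[R]_(p_ a, D)) (W : 'M[R]_(m, D)) :
  Kmx k (mxcol U) W = mxcol (fun a => Kmx k (U a) W).
Proof. by apply/matrixP => i l; rewrite !mxE !row_mxcol. Qed.

Lemma Kmx_mxcol_r p m (p_ : 'I_p -> nat)
    (U : forall a, 'M[R]_(p_ a, D)) (W : 'M[R]_(m, D)) :
  Kmx k W (mxcol U) = mxrow (fun a => Kmx k W (U a)).
Proof. by apply/matrixP => i l; rewrite !mxE !row_mxcol. Qed.

Lemma blk_Kmx_Afull J L (A : 'I_J -> 'M[R]_(L, D)) j i :
  blk (Kmx k (Afull A) (Afull A)) j i = Kmx k (A j) (A i).
Proof. by rewrite /Afull Kmx_mxcol_mxcol blk_mxblock. Qed.

Lemma eq_blocksub J L (Z Z' : 'M[R]_(\sum_(j < J) L)) (phi : {set 'I_J}) :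
  {in phi &, forall j i, blk Z j i = blk Z' j i} ->
  blocksub Z phi = blocksub Z' phi.
Proof. by move=> eqZ; apply: eq_mxblock => a b; apply: eqZ; apply: enum_valP. Qed.

Hypothesis k_sym : forall x y, k x y = k y x.

Lemma trmx_Kmx m n (U : 'M[R]_(m, D)) (W : 'M[R]_(n, D)) :
  (Kmx k U W)^T = Kmx k W U.
Proof. by apply/matrixP => i l; rewrite !mxE k_sym. Qed.

End KernelMatrices.

Section Prior.
Variables (R : realFieldType) (D : nat) (k : 'rV[R]_D -> 'rV[R]_D -> R).
Variables (J L : nat) (A : 'I_J -> 'M[R]_(L, D)) (pi : 'I_J -> {set 'I_J}).
Hypothesis k_sym : forall x y, k x y = k y x.
Hypothesis pi_lt : forall j i, i \in pi j -> (i < j)%N.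

Local Notation K := (Kmx k).
Local Notation F := (Fbig k A pi).
Local Notation Q := (Qbig k A pi).

Definition Fsub (j : 'I_J) (a : 'I_#|pi j|) : 'M[R]_L :=
  @submxrow R #|pi j| (fun _ => L) L (Fj k A pi j) a.
Arguments Fsub : clear implicits.

Lemma blk_Fbig j i : blk F j i = Fblock k A pi j i.
Proof. exact: blk_mxblock. Qed.

Lemma blk_Qbig j i : blk Q j i = if j == i then Qj k A pi j else 0.
Proof. exact: blk_mxdiag. Qed.

Lemma sum_Fblock_mul n j (Y : 'I_J -> 'M[R]_(L, n)) :
  \sum_m Fblock k A pi j m *m Y m = Y j - \sum_a Fsub j a *m Y (enum_val a).
Proof.
rewrite (bigD1 j) //= /Fblock eqxx mul1mx; congr (_ + _).
rewrite (eq_bigr (fun m => - \sum_(a < #|pi j|)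
     (if enum_val a == m then Fsub j a *m Y m else 0))); last first.
  move=> m /negPf ->; rewrite mulNmx mulmx_suml; congr (- _).
  by apply: eq_bigr => a _; case: ifP => _ //; rewrite mul0mx.
rewrite sumrN exchange_big /=; congr (- _); apply: eq_bigr => a _.
rewrite (bigD1 (enum_val a)) /=; last first.
  by apply/eqP => e; have := pi_lt (enum_valP a); rewrite e ltnn.
rewrite eqxx big1 ?addr0 // => m /andP[_]; rewrite eq_sym => /negPf -> //.
Qed.

Lemma sum_mul_trFblock n j (Y : 'I_J -> 'M[R]_(n, L)) :
  \sum_m Y m *m (Fblock k A pi j m)^T
  = Y j - \sum_a Y (enum_val a) *m (Fsub j a)^T.
Proof.
apply: trmx_inj; rewrite linearB /= !linear_sum /=.
under eq_bigr do rewrite trmx_mul trmxK.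
by rewrite sum_Fblock_mul sumrN; congr (_ - _); apply: eq_bigr => a _;
  rewrite trmx_mul trmxK.
Qed.

Lemma sum_Fsub_mul j (Y : 'I_J -> 'M[R]_L) :
  \sum_a Fsub j a *m Y (enum_val a)
  = Fj k A pi j *m @mxcol R #|pi j| (fun _ => L) L (fun a => Y (enum_val a)).
Proof. by rewrite -{1}(submxrowK (Fj k A pi j)) mul_mxrow_mxcol. Qed.

Lemma Kmx_Astack_l j m (W : 'M[R]_(m, D)) :
  K (Astack A (pi j)) W = mxcol (fun a => K (A (enum_val a)) W).
Proof. exact: Kmx_mxcol_l. Qed.

Lemma Qj_add_Fj_mul j : Qj k A pi j + Fj k A pi j *m K (Astack A (pi j)) (A j)
  = K (A j) (A j).
Proof. by rewrite /Qj /Fj subrK. Qed.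

Lemma Qbig_tr : Q^T = Q.
Proof.
rewrite /Qbig tr_mxdiag; apply: eq_mxdiag => j.
by rewrite /Qj linearB /= !trmx_mul !trmx_Kmx // trmx_inv /Kpi trmx_Kmx // !mulmxA.
Qed.

Hypothesis Kpi_unit : forall j, Kpi k A pi j \in unitmx.

Lemma Fj_mul_Kmx_pred j i : i \in pi j ->
  Fj k A pi j *m K (Astack A (pi j)) (A i) = K (A j) (A i).
Proof.
move=> pi_ji; set a0 := enum_rank_in pi_ji i.
have a0E : enum_val a0 = i by rewrite enum_rankK_in.
pose E := @mxcol R #|pi j| (fun _ => L) L (fun a => if a == a0 then 1%:M else 0).
have sum_E (p : nat) (B : 'I_#|pi j| -> 'M[R]_(p, L)) :
    \sum_b B b *m (if b == a0 then 1%:M else 0) = B a0.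
  by rewrite (bigD1 a0) //= eqxx mulmx1 big1 ?addr0 // => b /negPf ->; rewrite mulmx0.
have KE : K (Astack A (pi j)) (A i) = Kpi k A pi j *m E.
  rewrite /Kpi /Astack Kmx_mxcol_mxcol mul_mxblock_mxrow Kmx_mxcol_l.
  by apply: eq_mxcol => a; rewrite sum_E a0E.
by rewrite KE /Fj -mulmxA mulKmx // /Astack Kmx_mxcol_r mul_mxrow_mxcol sum_E a0E.
Qed.

Hypotheses (Q_unit : Q \in unitmx) (S_unit : S_C k A pi \in unitmx).
Local Notation Sigma := (invmx (S_C k A pi)).

Lemma Fbig_Sigma_trFbig : F *m Sigma *m F^T = Q.
Proof.
move: (S_unit); rewrite /S_C unitmx_mul => /andP[FtQ_unit F_unit].
have Ft_unit : F^T \in unitmx by rewrite unitmx_tr.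
have Qinv_unit : invmx Q \in unitmx by rewrite unitmx_inv.
by rewrite invmx_mul // invmx_mul // invmxK mulKVmx // mulmxKV.
Qed.

Lemma blk_Sigma_tr j i : blk Sigma j i = (blk Sigma i j)^T.
Proof.
have Sigma_tr : Sigma^T = Sigma.
  by rewrite trmx_inv /S_C !trmx_mul trmxK trmx_inv Qbig_tr !mulmxA.
by rewrite -blk_tr Sigma_tr.
Qed.

Local Notation U := (F *m Sigma).

Lemma blk_Qbig_U j i :
  blk Q j i = blk U j i - \sum_a blk U j (enum_val a) *m (Fsub i a)^T.
Proof.
rewrite -Fbig_Sigma_trFbig blk_mul -[RHS]sum_mul_trFblock.
by apply: eq_bigr => m _; rewrite blk_tr blk_Fbig.
Qed.

Lemma blk_U_lower (j i : 'I_J) : (i < j)%N -> blk U j i = 0.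
Proof.
suff below n (i' : 'I_J) : (i' < n)%N -> (i' < j)%N -> blk U j i' = 0.
  exact: below.
elim: n i' => // n IH {}i lt_in lt_ij.
have ne_ji : j != i by rewrite neq_ltn lt_ij orbT.
have sum0 : \sum_a blk U j (enum_val a) *m (Fsub i a)^T = 0 :> 'M_L.
  by apply: big1 => a _; have := pi_lt (enum_valP a) => lt_ai;
    rewrite IH ?mul0mx //; lia.
by have := blk_Qbig_U j i; rewrite blk_Qbig (negPf ne_ji) sum0 subr0.
Qed.

Lemma blk_U_diag j : blk U j j = Qj k A pi j.
Proof.
have sum0 : \sum_a blk U j (enum_val a) *m (Fsub j a)^T = 0 :> 'M_L.
  by apply: big1 => a _; rewrite blk_U_lower ?mul0mx // pi_lt // enum_valP.
by have := blk_Qbig_U j j; rewrite blk_Qbig eqxx sum0 subr0.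
Qed.

Lemma blk_U j i :
  blk U j i = blk Sigma j i - \sum_a Fsub j a *m blk Sigma (enum_val a) i.
Proof.
rewrite blk_mul -[RHS](sum_Fblock_mul _ (blk Sigma ^~ i)).
by apply: eq_bigr => m _; rewrite blk_Fbig.
Qed.

Lemma blk_Sigma_lower_agree j i : i \in pi j ->
  (forall a, a \in pi j -> blk Sigma a i = K (A a) (A i)) ->
  blk Sigma j i = K (A j) (A i).
Proof.
move=> pi_ji Sigma_pred; have := blk_U j i.
rewrite blk_U_lower ?pi_lt // => /eqP; rewrite eq_sym subr_eq0 => /eqP ->.
rewrite (eq_bigr (fun a => Fsub j a *m K (A (enum_val a)) (A i))); last first.
  by move=> a _; rewrite Sigma_pred // enum_valP.
by rewrite (sum_Fsub_mul j (fun m => K (A m) (A i))) -Kmx_Astack_l Fj_mul_Kmx_pred.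
Qed.

Lemma blk_Sigma_diag_agree j :
  (forall a, a \in pi j -> blk Sigma a j = K (A a) (A j)) ->
  blk Sigma j j = K (A j) (A j).
Proof.
move=> Sigma_pred; have := blk_U j j; rewrite blk_U_diag => /eqP.
rewrite eq_sym subr_eq => /eqP ->.
rewrite (eq_bigr (fun a => Fsub j a *m K (A (enum_val a)) (A j))); last first.
  by move=> a _; rewrite Sigma_pred // enum_valP.
by rewrite (sum_Fsub_mul j (fun m => K (A m) (A j))) -Kmx_Astack_l Qj_add_Fj_mul.
Qed.

End Prior.

Section ConsecutivePredecessors.
Variables (R : realFieldType) (D : nat) (k : 'rV[R]_D -> 'rV[R]_D -> R).
Variables (J L C : nat) (A : 'I_J -> 'M[R]_(L, D)) (pi : 'I_J -> {set 'I_J}).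
Hypothesis pi_consec :
  forall j : 'I_J, pi j = [set i : 'I_J | (j - minn j (C - 1) <= i < j)%N].

Lemma mem_pi_consec j i : (i \in pi j) = (j - minn j (C - 1) <= i < j)%N.
Proof. by rewrite pi_consec inE. Qed.

Lemma pi_consec_lt j i : i \in pi j -> (i < j)%N.
Proof. by rewrite mem_pi_consec => /andP[]. Qed.

Lemma psi_consec_band j x y : (1 <= C)%N ->
  x \in psi C pi j -> y \in psi C pi j -> (x < y + C)%N.
Proof.
move=> C_pos; rewrite /psi; case: ifP => lt_jC; rewrite !inE !mem_pi_consec.
  by move=> /orP[] /andP[? ?] /orP[] /andP[? ?]; lia.
by move=> /orP[/andP[? ?]|/eqP ->] /orP[/andP[? ?]|/eqP ->]; lia.
Qed.

Hypotheses (k_sym : forall x y, k x y = k y x)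
  (Kpi_unit : forall j, Kpi k A pi j \in unitmx)
  (Q_unit : Qbig k A pi \in unitmx) (S_unit : S_C k A pi \in unitmx).
Local Notation K := (Kmx k).
Local Notation Sigma := (invmx (S_C k A pi)).

Lemma blk_Sigma_band_row (j : 'I_J) :
  (forall x y : 'I_J, (x < j)%N -> (y < j)%N -> (x < y + C)%N -> (y < x + C)%N ->
     blk Sigma x y = K (A x) (A y)) ->
  forall y : 'I_J, (y <= j)%N -> (j < y + C)%N -> blk Sigma j y = K (A j) (A y).
Proof.
move=> band_below.
have lower (y : 'I_J) : (y < j)%N -> (j < y + C)%N -> blk Sigma j y = K (A j) (A y).
  move=> lt_yj lt_jyC; apply: blk_Sigma_lower_agree => //.
  - exact: pi_consec_lt.
  - by rewrite mem_pi_consec; lia.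
  - by move=> a; rewrite mem_pi_consec => *; apply: band_below; lia.
move=> y; rewrite leq_eqVlt => /orP[/eqP/val_inj -> _|]; last exact: lower.
apply: blk_Sigma_diag_agree => // [|a]; first exact: pi_consec_lt.
by rewrite mem_pi_consec => *; rewrite blk_Sigma_tr // lower ?trmx_Kmx //; lia.
Qed.

Lemma blk_Sigma_band (x y : 'I_J) : (x < y + C)%N -> (y < x + C)%N ->
  blk Sigma x y = K (A x) (A y).
Proof.
suff band n (x' y' : 'I_J) : (x' < n)%N -> (y' < n)%N ->
    (x' < y' + C)%N -> (y' < x' + C)%N -> blk Sigma x' y' = K (A x') (A y').
  exact: band.
elim: n x' y' => // n IH {}x {}y.
wlog le_yx : x y / (y <= x)%N => [sym|].
  have [/sym //|lt_xy] := leqP y x.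
  by move=> *; rewrite blk_Sigma_tr // sym ?trmx_Kmx // ltnW.
move=> lt_xn lt_yn lt_xyC _; have [lt_xn'|] := ltnP x n; first by apply: IH; lia.
move=> le_nx; apply: blk_Sigma_band_row => // x' y' *; apply: IH; lia.
Qed.

End ConsecutivePredecessors.

Theorem mainTheorem11 (R : realFieldType) (D : nat)
  (k : 'rV[R]_D -> 'rV[R]_D -> R) (J L C : nat)
  (A : 'I_J -> 'M[R]_(L, D)) (pi : 'I_J -> {set 'I_J}) :
  pd_kernel k ->
  (1 <= L)%N -> (1 <= C <= J)%N ->
  (forall j : 'I_J, pi j = [set i : 'I_J | (j - minn j (C - 1) <= i < j)%N]) ->
  (forall j : 'I_J, Kpi k A pi j \in unitmx) ->
  Qbig k A pi \in unitmx ->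
  S_C k A pi \in unitmx ->
  (forall j : 'I_J,
     blocksub (invmx (S_C k A pi)) (psi C pi j)
     = blocksub (Kmx k (Afull A) (Afull A)) (psi C pi j))
  /\ (C = J -> invmx (S_C k A pi) = Kmx k (Afull A) (Afull A)).
Proof.
move=> [k_sym _] _ /andP[C_pos _] pi_consec Kpi_unit Q_unit S_unit.
have band (x y : 'I_J) : (x < y + C)%N -> (y < x + C)%N ->
    blk (invmx (S_C k A pi)) x y = blk (Kmx k (Afull A) (Afull A)) x y.
  by move=> *; rewrite blk_Kmx_Afull (blk_Sigma_band pi_consec).
split=> [j | CJ].
  apply: eq_blocksub => x y x_psi y_psi; apply: band.
    exact: (psi_consec_band pi_consec C_pos x_psi y_psi).
  exact: (psi_consec_band pi_consec C_pos y_psi x_psi).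
apply: eq_blk => x y; have := ltn_ord x; have := ltn_ord y.
by move=> *; apply: band; lia.
Qed.
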